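(* Let $I$ be a commutative monoid and let $K(I)$ be its Grothendieck group. Then the Burnside ring $\mathrm{A}(I)$ of $I$ is isomorphic (as a ring) to the usual Burnside ring $\mathrm{A}(K(I))$ of the group $K(I)$.
   Context: Let $I$ be a monoid with operation $\otimes$ and identity $1$. For a set $X$, $\mathrm{End}_l(X)$ denotes self-maps written on the left with product $f\circ g$ ($g$ first); $\mathrm{End}_r(X)$ denotes self-maps written on the right, $x\mapsto(x)f$, with $(x)(fg)=((x)f)g$. An $I$-set is a set $X$ with a pair $\xi=(\xi_l,\xi_r)$ of monoid homomorphisms $\xi_l:I\to\mathrm{End}_l(X)$, $\xi_r:I\to\mathrm{End}_r(X)$ with $(\xi_l(i)(x))\xi_r(j)=\xi_l(i)((x)\xi_r(j))$; $f:(X,\xi)\to(Y,\eta)$ is $I$-equivariant if $(f(\xi_l(i)(x)))\eta_r(i)=\eta_l(i)(f((x)\xi_r(i)))$ for all $i,x$. An $I$-set is invertible on one side if either $\xi_l(i)$ is bijective for all $i$ or $\xi_r(i)$ is bijective for all $i$; $\mathrm{bAct}(I)$ is the category of finite $I$-sets that are products (componentwise action) of $I$-sets invertible on one side, with $I$-equivariant maps. For an $I$-set $(A,\alpha)$: $\mathrm{Map}^l_I(A)$ is the set of $f:I\to A$ with $(f(j))\alpha_r(i)=\alpha_l(i)(f(j\otimes i))$ for all $i,j$, with action $\theta_l(k)=\mathrm{id}$, $((f)\theta_r(k))(j)=f(k\otimes j)$; $\mathrm{Map}^r_I(A)$ is the set of $f:I\to A$ with $(f(i\otimes j))\alpha_r(i)=\alpha_l(i)(f(j))$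 for all $i,j$, with action $(\vartheta_l(k)(f))(i)=f(i\otimes k)$, $\vartheta_r(k)=\mathrm{id}$; both are functors via $u\mapsto(h\mapsto u\circ h)$, and $\mathrm{Inv}=\mathrm{Map}^l_I\circ\mathrm{Map}^r_I$. A morphism $f$ of $\mathrm{bAct}(I)$ is a weak equivalence if $\mathrm{Inv}(f)$ is a bijection. Let $\mathrm{Ho}(\mathrm{bAct}(I))$ be the localization of $\mathrm{bAct}(I)$ at the weak equivalences. The isomorphism classes of objects of $\mathrm{Ho}(\mathrm{bAct}(I))$ form a semiring under disjoint union (addition) and cartesian product with componentwise action (multiplication); the Burnside ring $\mathrm{A}(I)$ is the Grothendieck ring of this semiring. For a group $G$, $\mathrm{A}(G)$ is the usual Burnside ring, the Grothendieck ring of isomorphism classes of finite $G$-sets under disjoint union and product.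
   Formalization: The objects of bAct(I) are the finite I-sets built, up to isomorphism, from I-sets invertible on one side by taking products and also disjoint unions, not by products alone. Apart from conventions, each condition added here is assumed in the paper as well or is needed for the statement above to hold. *)

From HB Require Import structures.
From mathcomp Require Import all_boot.
From Stdlib Require Import Relations.

Set Implicit Arguments.
Unset Strict Implicit.
Unset Printing Implicit Defensive.

Record bs_monoid := BsMonoid {
  mT : Type;
  mop : mT -> mT -> mT;
  mone : mT;
  mopA : forall a b c, mop a (mop b c) = mop (mop a b) c;
  mop1m : forall a, mop mone a = a;
  mopm1 : forall a, mop a mone = a }.

Definition bs_commutative (I : bs_monoid) := forall a b : mT I, mop a b = mop b a.

(* I-sets (raw data: left action l i = xi_l(i), right action          *)
(*  r i x = (x) xi_r(i))                                              *)

Definition is_iset (I : bs_monoid) (X : Type) (l r : mT I -> X -> X) : Prop :=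
  [/\ (forall x, l (mone I) x = x),
      (forall i j x, l (mop i j) x = l i (l j x)),
      (forall x, r (mone I) x = x),
      (forall i j x, r (mop i j) x = r j (r i x))
    & (forall i j x, r j (l i x) = l i (r j x))].

Definition iequivariant (I : bs_monoid) (X Y : Type)
  (lX rX : mT I -> X -> X) (lY rY : mT I -> Y -> Y) (f : X -> Y) : Prop :=
  forall (i : mT I) (x : X), rY i (f (lX i x)) = lY i (f (rX i x)).

Definition MapR_pred (I : bs_monoid) (A : Type) (l r : mT I -> A -> A)
  (f : mT I -> A) : Prop :=
  forall i j, r i (f (mop i j)) = l i (f j).

Definition MapL_pred (I : bs_monoid) (B : Type) (l r : mT I -> B -> B)
  (f : mT I -> B) : Prop :=
  forall i j, r i (f j) = l i (f (mop j i)).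

(* the action of Map^r_I(A), defined on the ambient set I -> A *)
Definition varthetaL (I : bs_monoid) (A : Type) (k : mT I) (f : mT I -> A)
  : mT I -> A := fun i => f (mop i k).
Definition varthetaR (I : bs_monoid) (A : Type) (k : mT I) (f : mT I -> A)
  : mT I -> A := f.

(* Inv(A) = Map^l_I(Map^r_I(A)), as a subset of I -> (I -> A) *)
Definition Inv_pred (I : bs_monoid) (A : Type) (l r : mT I -> A -> A)
  (F : mT I -> mT I -> A) : Prop :=
  (forall j, MapR_pred l r (F j)) /\
  MapL_pred (@varthetaL I A) (@varthetaR I A) F.

Definition Inv_bijective (I : bs_monoid) (A B : Type)
  (lA rA : mT I -> A -> A) (lB rB : mT I -> B -> B) (u : A -> B) : Prop :=
  (forall F G, Inv_pred lA rA F -> Inv_pred lA rA G ->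
     (fun j i => u (F j i)) = (fun j i => u (G j i)) -> F = G) /\
  (forall H, Inv_pred lB rB H ->
     exists F, Inv_pred lA rA F /\ (fun j i => u (F j i)) = H).

Record fiset (I : bs_monoid) := FISet {
  fcar : finType;
  fl : mT I -> fcar -> fcar;
  fr : mT I -> fcar -> fcar }.
Arguments fl {I} f i x : rename.
Arguments fr {I} f i x : rename.

Definition fiset_ok (I : bs_monoid) (X : fiset I) := is_iset (@fl I X) (@fr I X).

Definition one_side_invertible (I : bs_monoid) (X : fiset I) : Prop :=
  (forall i, bijective (fl X i)) \/ (forall i, bijective (fr X i)).

Definition prodI (I : bs_monoid) (X Y : fiset I) : fiset I :=
  @FISet I (fcar X * fcar Y)%type
    (fun i p => (fl X i p.1, fl Y i p.2))
    (fun i p => (fr X i p.1, fr Y i p.2)).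

Definition sumI (I : bs_monoid) (X Y : fiset I) : fiset I :=
  @FISet I (fcar X + fcar Y)%type
    (fun i s => match s with inl x => inl (fl X i x) | inr y => inr (fl Y i y) end)
    (fun i s => match s with inl x => inl (fr X i x) | inr y => inr (fr Y i y) end).

Definition emptyI (I : bs_monoid) : fiset I :=
  @FISet I void (fun _ x => x) (fun _ x => x).
Definition pointI (I : bs_monoid) : fiset I :=
  @FISet I unit (fun _ x => x) (fun _ x => x).

Definition strict_iso (I : bs_monoid) (X Y : fiset I) : Prop :=
  exists f : fcar X -> fcar Y,
    [/\ bijective f, (forall i x, f (fl X i x) = fl Y i (f x))
      & (forall i x, f (fr X i x) = fr Y i (f x))].

Inductive in_bAct (I : bs_monoid) : fiset I -> Prop :=
| bA_inv X : fiset_ok X -> one_side_invertible X -> in_bAct X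
| bA_prod X Y : in_bAct X -> in_bAct Y -> in_bAct (prodI X Y)
| bA_sum X Y : in_bAct X -> in_bAct Y -> in_bAct (sumI X Y)
| bA_iso X Y : in_bAct X -> strict_iso X Y -> in_bAct Y.

Definition is_morph (I : bs_monoid) (X Y : fiset I) (f : fcar X -> fcar Y) :=
  [/\ in_bAct X, in_bAct Y & iequivariant (@fl I X) (@fr I X) (@fl I Y) (@fr I Y) f].

Definition is_weq (I : bs_monoid) (X Y : fiset I) (f : fcar X -> fcar Y) :=
  is_morph f /\ Inv_bijective (@fl I X) (@fr I X) (@fl I Y) (@fr I Y) f.

(* The localization Ho(bAct(I)) (Gabriel-Zisman zigzag construction)   *)

Inductive zz (I : bs_monoid) : fiset I -> fiset I -> Type :=
| zz_nil X : zz X X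
| zz_fwd X Y Z : (fcar X -> fcar Y) -> zz Y Z -> zz X Z
| zz_bwd X Y Z : (fcar Y -> fcar X) -> zz Y Z -> zz X Z.  (* formal inverse of Y -> X *)

Fixpoint zz_cat (I : bs_monoid) (X Y Z : fiset I) (p : zz X Y) : zz Y Z -> zz X Z :=
  match p in zz X0 Y0 return zz Y0 Z -> zz X0 Z with
  | zz_nil _ => fun q => q
  | zz_fwd _ _ _ f p' => fun q => zz_fwd f (zz_cat p' q)
  | zz_bwd _ _ _ w p' => fun q => zz_bwd w (zz_cat p' q)
  end.

Fixpoint zz_wf (I : bs_monoid) (X Y : fiset I) (p : zz X Y) : Prop :=
  match p with
  | zz_nil X0 => in_bAct X0
  | zz_fwd _ _ _ f p' => is_morph f /\ zz_wf p'
  | zz_bwd _ _ _ w p' => is_weq w /\ zz_wf p'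
  end.

Inductive zz_gen (I : bs_monoid) : forall X Y : fiset I, zz X Y -> zz X Y -> Prop :=
| zg_id X : in_bAct X ->
    zz_gen (zz_fwd (@id (fcar X)) (zz_nil X)) (zz_nil X)
| zg_comp X Y Z (f : fcar X -> fcar Y) (g : fcar Y -> fcar Z) :
    is_morph f -> is_morph g -> is_morph (g \o f) ->
    zz_gen (zz_fwd f (zz_fwd g (zz_nil Z))) (zz_fwd (g \o f) (zz_nil Z))
| zg_wl X Y (w : fcar X -> fcar Y) : is_weq w ->
    zz_gen (zz_fwd w (zz_bwd w (zz_nil X))) (zz_nil X)
| zg_wr X Y (w : fcar X -> fcar Y) : is_weq w ->
    zz_gen (zz_bwd w (zz_fwd w (zz_nil Y))) (zz_nil Y).

Definition zz_step (I : bs_monoid) (X W : fiset I) (p p' : zz X W) : Prop :=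
  exists (Y Z : fiset I) (a : zz X Y) (g g' : zz Y Z) (b : zz Z W),
    [/\ zz_gen g g', p = zz_cat a (zz_cat g b) & p' = zz_cat a (zz_cat g' b)].

Definition zz_equiv (I : bs_monoid) (X W : fiset I) : relation (zz X W) :=
  clos_refl_sym_trans (zz X W) (@zz_step I X W).

Definition Ho_iso (I : bs_monoid) (X Y : fiset I) : Prop :=
  exists (p : zz X Y) (q : zz Y X),
    [/\ zz_wf p, zz_wf q, zz_equiv (zz_cat p q) (zz_nil X)
      & zz_equiv (zz_cat q p) (zz_nil Y)].

Record sdata := SData {
  sT : Type;
  seqv : sT -> sT -> Prop;
  sadd : sT -> sT -> sT;
  smul : sT -> sT -> sT;
  szero : sT;
  sone : sT }.

Record rdata := RData {
  rT : Type;
  reqv : rT -> rT -> Prop;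
  radd : rT -> rT -> rT;
  rmul : rT -> rT -> rT;
  rone : rT }.

(* Grothendieck ring: formal differences (a, b) = a - b *)
Definition groth (S : sdata) : rdata := {|
  rT := (sT S * sT S)%type;
  reqv := fun a b => exists k,
     seqv (sadd (sadd a.1 b.2) k) (sadd (sadd b.1 a.2) k);
  radd := fun a b => (sadd a.1 b.1, sadd a.2 b.2);
  rmul := fun a b => (sadd (smul a.1 b.1) (smul a.2 b.2),
                      sadd (smul a.1 b.2) (smul a.2 b.1));
  rone := (sone S, szero S) |}.

(* ring isomorphism between the quotients rT R / reqv R and rT S / reqv S *)
Definition ring_isomorphic (R S : rdata) : Prop :=
  exists phi : rT R -> rT S,
    [/\ (forall a b, reqv a b <-> reqv (phi a) (phi b)),
        (forall s, exists a, reqv (phi a) s),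
        (forall a b, reqv (phi (radd a b)) (radd (phi a) (phi b))),
        (forall a b, reqv (phi (rmul a b)) (rmul (phi a) (phi b)))
      & reqv (phi (rone R)) (rone S)].

Lemma in_bAct_empty (I : bs_monoid) : in_bAct (emptyI I).
Proof.
apply: bA_inv; first by split => //= [] [].
by left => i; exists id; case.
Qed.

Lemma in_bAct_point (I : bs_monoid) : in_bAct (pointI I).
Proof.
apply: bA_inv; first by split.
by left => i; exists id.
Qed.

Definition bObj (I : bs_monoid) := {X : fiset I | in_bAct X}.

Definition bsum (I : bs_monoid) (X Y : bObj I) : bObj I :=
  exist _ (sumI (sval X) (sval Y)) (bA_sum (svalP X) (svalP Y)).
Definition bprod (I : bs_monoid) (X Y : bObj I) : bObj I :=
  exist _ (prodI (sval X) (sval Y)) (bA_prod (svalP X) (svalP Y)).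

Definition HoSemiring (I : bs_monoid) : sdata := {|
  sT := bObj I;
  seqv := fun X Y => Ho_iso (sval X) (sval Y);
  sadd := @bsum I;
  smul := @bprod I;
  szero := exist _ (emptyI I) (in_bAct_empty I);
  sone := exist _ (pointI I) (in_bAct_point I) |}.

Definition BurnsideMonoid (I : bs_monoid) : rdata := groth (HoSemiring I).

Record gdata := GData {
  gT : Type;
  geqv : gT -> gT -> Prop;
  gmul : gT -> gT -> gT;
  gone : gT }.

Record gset (G : gdata) := GSet {
  gcar : finType;
  gact : gT G -> gcar -> gcar }.
Arguments gact {G} g g0 x : rename.

Definition is_gset (G : gdata) (X : gset G) : Prop :=
  [/\ (forall g h x, geqv g h -> gact X g x = gact X h x),
      (forall x, gact X (gone G) x = x)
    & (forall g h x, gact X (gmul g h) x = gact X g (gact X h x))].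

Definition gset_iso (G : gdata) (X Y : gset G) : Prop :=
  exists f : gcar X -> gcar Y,
    bijective f /\ forall g x, f (gact X g x) = gact Y g (f x).

Definition gsumS (G : gdata) (X Y : gset G) : gset G :=
  @GSet G (gcar X + gcar Y)%type
    (fun g s => match s with inl x => inl (gact X g x) | inr y => inr (gact Y g y) end).
Definition gprodS (G : gdata) (X Y : gset G) : gset G :=
  @GSet G (gcar X * gcar Y)%type (fun g p => (gact X g p.1, gact Y g p.2)).
Definition gemptyS (G : gdata) : gset G := @GSet G void (fun _ x => x).
Definition gpointS (G : gdata) : gset G := @GSet G unit (fun _ x => x).

Definition GObj (G : gdata) := {X : gset G | is_gset X}.

Lemma is_gset_sum (G : gdata) (X Y : gset G) :
  is_gset X -> is_gset Y -> is_gset (gsumS X Y).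
Proof.
move=> [hX1 hX2 hX3] [hY1 hY2 hY3]; split => /=.
- by move=> g h [x|y] e; rewrite ?(hX1 _ _ _ e) ?(hY1 _ _ _ e).
- by case=> [x|y]; rewrite ?hX2 ?hY2.
- by move=> g h [x|y]; rewrite ?hX3 ?hY3.
Qed.

Lemma is_gset_prod (G : gdata) (X Y : gset G) :
  is_gset X -> is_gset Y -> is_gset (gprodS X Y).
Proof.
move=> [hX1 hX2 hX3] [hY1 hY2 hY3]; split => /=.
- by move=> g h [x y] e; rewrite (hX1 _ _ _ e) (hY1 _ _ _ e).
- by case=> x y; rewrite hX2 hY2.
- by move=> g h [x y]; rewrite hX3 hY3.
Qed.

Lemma is_gset_empty (G : gdata) : is_gset (gemptyS G).
Proof. by split. Qed.
Lemma is_gset_point (G : gdata) : is_gset (gpointS G).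
Proof. by split. Qed.

Definition GSemiring (G : gdata) : sdata := {|
  sT := GObj G;
  seqv := fun X Y => gset_iso (sval X) (sval Y);
  sadd := fun X Y => exist _ (gsumS (sval X) (sval Y)) (is_gset_sum (svalP X) (svalP Y));
  smul := fun X Y => exist _ (gprodS (sval X) (sval Y)) (is_gset_prod (svalP X) (svalP Y));
  szero := exist _ (gemptyS G) (is_gset_empty G);
  sone := exist _ (gpointS G) (is_gset_point G) |}.

Definition BurnsideGroup (G : gdata) : rdata := groth (GSemiring G).

(* pairs (a, b) = a - b, (a,b) ~ (c,d) iff a d k = c b k for some k   *)

Definition Kgroup (I : bs_monoid) : gdata := {|
  gT := (mT I * mT I)%type;
  geqv := fun p q => exists k, mop (mop p.1 q.2) k = mop (mop q.1 p.2) k;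
  gmul := fun p q => (mop p.1 q.1, mop p.2 q.2);
  gone := (mone I, mone I) |}.

(* For commutative [I], invariant maps [F : I -> I -> X] can be shifted in both
   arguments, and the shift by [(j, k)] only depends on the class of [(j, k)]
   in [K(I)]; so [Inv(X)] is a [K(I)]-set.  On objects of [bAct(I)] an
   invariant map is determined by its value at [(1, 1)] (a minimal-image
   argument on the invertible side), so [Inv(X)] is finite, and [Inv] commutes
   with sums and products.  Zigzags of weak equivalences transport invariant
   maps, so objects isomorphic in [Ho(bAct(I))] have isomorphic [K(I)]-sets.
   Conversely a [K(I)]-set [S] is [Inv] of [S] seen as an [I]-set ([i] acting
   as [i^-1]), and [Inv(X)] includes into [X] by a weak equivalence, so
   isomorphic [K(I)]-sets come from isomorphic objects.  Thus [Inv] is an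
   isomorphism of the semirings of isomorphism classes, hence of their
   Grothendieck rings. *)

From mathcomp Require Import all_boot.
From Stdlib Require Import ClassicalEpsilon FunctionalExtensionality Relations.

Set Implicit Arguments.
Unset Strict Implicit.
Unset Printing Implicit Defensive.

Definition classically (P : Prop) : bool :=
  if excluded_middle_informative P then true else false.

Lemma classicallyP (P : Prop) : reflect P (classically P).
Proof. by rewrite /classically; case: excluded_middle_informative; constructor. Qed.

Lemma ex_least_nat (P : nat -> Prop) :
  (exists n, P n) -> exists2 n, P n & forall m, P m -> n <= m.
Proof.
move=> [n Pn]; have exb : exists n, classically (P n) by exists n; apply/classicallyP.
by case: (ex_minnP exb) => m /classicallyP Pm min_m; exists m => // k /classicallyP /min_m.
Qed.

Lemma can2_morph (A B : Type) (f : A -> B) (f' : B -> A) (a : A -> A) (b : B -> B) :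
  cancel f f' -> cancel f' f -> {morph f : x / a x >-> b x} -> {morph f' : y / b y >-> a y}.
Proof. by move=> fK f'K fab y; apply: (can_inj fK); rewrite fab !f'K. Qed.

Lemma eq_fun2 (A B C : Type) (F G : A -> B -> C) :
  (forall a b, F a b = G a b) -> F = G.
Proof.
by move=> eFG; apply: functional_extensionality => a;
   apply: functional_extensionality => b.
Qed.

Section MinimalImage.
Variables (I : bs_monoid) (X : finType) (psi : mT I -> X -> X).
Hypothesis psiM : forall i j x, psi (mop i j) x = psi i (psi j x).

(* Take [m] with [psi m] of minimal image [C]: every [psi k] is injective on
   [C], all values [h k] lie in [C], and [psi k (h k) = h 1]. *)
Lemma invariant_fun_eq (h h' : mT I -> X) :
  (forall i m, h m = psi i (h (mop i m))) ->
  (forall i m, h' m = psi i (h' (mop i m))) ->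
  h (mone I) = h' (mone I) -> h =1 h'.
Proof.
move=> hh hh' eq1 k.
have [c [m im_m] min_c] := ex_least_nat (ex_intro (fun c => exists m,
  #|[set psi m x | x in X]| = c) _ (ex_intro _ (mone I) erefl)).
set C := [set psi m x | x in X] in im_m.
have injC : {in C &, injective (psi k)}.
  apply/imset_injP; rewrite eqn_leq leq_imset_card /= im_m.
  have -> : [set psi k x | x in C] = [set psi (mop k m) x | x in X].
    by rewrite /C -imset_comp; apply: eq_imset => x /=; rewrite psiM.
  by apply: min_c; eexists.
have inC g : (forall i m, g m = psi i (g (mop i m))) -> g k \in C.
  by move=> hg; rewrite (hg m k); apply: imset_f.
apply: injC; [exact: inC | exact: inC |].
by move: (hh k (mone I)) (hh' k (mone I)); rewrite !mopm1 => <- <-.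
Qed.

End MinimalImage.

Section GsetIso.
Variable G : gdata.

Lemma gset_iso_of_rel (X Y : gset G) (R : gcar X -> gcar Y -> Prop) :
  (forall x, exists y, R x y) ->
  (forall x y y', R x y -> R x y' -> y = y') ->
  (forall x x' y, R x y -> R x' y -> x = x') ->
  (forall y, exists x, R x y) ->
  (forall g x y, R x y -> R (gact X g x) (gact Y g y)) ->
  gset_iso X Y.
Proof.
move=> R_tot R_fun R_inj R_surj R_act.
pose f x := sval (constructive_indefinite_description _ (R_tot x)).
pose f' y := sval (constructive_indefinite_description _ (R_surj y)).
have Rf x : R x (f x) by rewrite /f; case: constructive_indefinite_description.
have Rf' y : R (f' y) y by rewrite /f'; case: constructive_indefinite_description.
exists f; split.
  by exists f' => [x|y]; [apply: R_inj (Rf' _) (Rf _) | apply: R_fun (Rf _) (Rf' _)].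
by move=> g x; apply: R_fun (Rf _) _; apply: R_act.
Qed.

Lemma gset_iso_refl (X : gset G) : gset_iso X X.
Proof. by exists id; split=> //; exists id. Qed.

Lemma gset_iso_sym (X Y : gset G) : gset_iso X Y -> gset_iso Y X.
Proof.
case=> f [[f' fK f'K] f_act]; exists f'; split; first by exists f.
by move=> g; apply: can2_morph fK f'K (f_act g).
Qed.

Lemma gset_iso_trans (X Y Z : gset G) : gset_iso X Y -> gset_iso Y Z -> gset_iso X Z.
Proof.
case=> f [f_bij f_act] [h [h_bij h_act]]; exists (h \o f); split; first exact: bij_comp.
by move=> g x /=; rewrite f_act h_act.
Qed.

Lemma gset_iso_sum (X X' Y Y' : gset G) :
  gset_iso X X' -> gset_iso Y Y' -> gset_iso (gsumS X Y) (gsumS X' Y').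
Proof.
case=> f [[f' fK f'K] f_act] [h [[h' hK h'K] h_act]].
exists (fun s => match s with inl x => inl (f x) | inr y => inr (h y) end); split.
  exists (fun s => match s with inl x => inl (f' x) | inr y => inr (h' y) end);
  by case=> x /=; rewrite ?fK ?f'K ?hK ?h'K.
by move=> g [x|y] /=; rewrite ?f_act ?h_act.
Qed.

End GsetIso.

Section Localization.
Variable I : bs_monoid.

Lemma zz_catA (X Y Z W : fiset I) (p : zz X Y) (q : zz Y Z) (r : zz Z W) :
  zz_cat p (zz_cat q r) = zz_cat (zz_cat p q) r.
Proof. by elim: p q => //= [X0 Y0 Z0 f p IHp|X0 Y0 Z0 w p IHp] q; rewrite IHp. Qed.

Lemma zz_cat0 (X Y : fiset I) (p : zz X Y) : zz_cat p (zz_nil Y) = p.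
Proof. by elim: p => //= [X0 Y0 Z0 f p ->|X0 Y0 Z0 w p ->]. Qed.

Lemma zz_wf_cat (X Y Z : fiset I) (p : zz X Y) (q : zz Y Z) :
  zz_wf p -> zz_wf q -> zz_wf (zz_cat p q).
Proof. by elim: p q => //= [X0 Y0 Z0 f p IHp|X0 Y0 Z0 w p IHp] q [? /IHp wpq] /wpq. Qed.

Lemma zz_equiv_cat (X Y Z W : fiset I) (a : zz X Y) (u u' : zz Y Z) (b : zz Z W) :
  zz_equiv u u' -> zz_equiv (zz_cat a (zz_cat u b)) (zz_cat a (zz_cat u' b)).
Proof.
elim=> {u u'} [u u' [Y' [Z' [a' [g [g' [b' [gg' -> ->]]]]]]] | u | | ].
- apply: rst_step; exists Y', Z', (zz_cat a a'), g, g', (zz_cat b' b).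
  by split; rewrite // -!zz_catA.
- exact: rst_refl.
- by move=> u u' _; apply: rst_sym.
- by move=> u v w _ uv _; apply: rst_trans uv.
Qed.

Lemma zz_gen_equiv (X Y : fiset I) (g g' : zz X Y) : zz_gen g g' -> zz_equiv g g'.
Proof.
move=> gg'; apply: rst_step; exists X, Y, (zz_nil X), g, g', (zz_nil Y).
by rewrite /= !zz_cat0.
Qed.

Lemma Ho_iso_sym (X Y : fiset I) : Ho_iso X Y -> Ho_iso Y X.
Proof. by case=> p [q [wp wq pq qp]]; exists q, p. Qed.

Lemma Ho_iso_trans (X Y Z : fiset I) : Ho_iso X Y -> Ho_iso Y Z -> Ho_iso X Z.
Proof.
case=> p [q [wp wq pq qp]] [p' [q' [wp' wq' pq' qp']]].
exists (zz_cat p p'), (zz_cat q' q); split; try exact: zz_wf_cat.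
- by rewrite -zz_catA (zz_catA p'); apply: rst_trans (zz_equiv_cat p q pq') pq.
- by rewrite -zz_catA (zz_catA q); apply: rst_trans (zz_equiv_cat q' p' qp) qp'.
Qed.

Lemma weq_Ho_iso (X Y : fiset I) (w : fcar X -> fcar Y) : is_weq w -> Ho_iso X Y.
Proof.
move=> weq_w; have [[bX bY _] _] := weq_w.
exists (zz_fwd w (zz_nil Y)), (zz_bwd w (zz_nil X)); split=> //=.
- by split=> //; case: weq_w.
- exact/zz_gen_equiv/zg_wl.
- exact/zz_gen_equiv/zg_wr.
Qed.

End Localization.

(** * Invariant maps *)

Section InvariantMaps.
Variables (I : bs_monoid) (hc : bs_commutative I).
Local Notation T := (mT I).
Local Notation one := (mone I).
Local Notation "a ** b" := (mop a b) (at level 40, left associativity).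

Lemma mopAC (a b c : T) : a ** b ** c = a ** c ** b.
Proof. by rewrite -!mopA (hc b). Qed.

Lemma mopCA (a b c : T) : a ** (b ** c) = b ** (a ** c).
Proof. by rewrite !mopA (hc a). Qed.

Definition Inv (X : fiset I) (F : T -> T -> fcar X) := Inv_pred (fl X) (fr X) F.

Lemma InvE (X : fiset I) (F : T -> T -> fcar X) : Inv F <->
  (forall i j k, fr X i (F j (i ** k)) = fl X i (F j k)) /\
  (forall i j k, F j k = F (j ** i) (k ** i)).
Proof.
split=> [[FR FL]|[FR FL]]; split.
- by move=> i j k; apply: FR.
- by move=> i j k; move: (FL i j) => /(congr1 (fun f => f k)).
- by move=> j i k; apply: FR.
- by move=> i j; apply: functional_extensionality => k; apply: FL.
Qed.

Lemma InvR (X : fiset I) (F : T -> T -> fcar X) :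
  Inv F -> forall i j k, fr X i (F j (i ** k)) = fl X i (F j k).
Proof. by case/InvE. Qed.

Lemma InvL (X : fiset I) (F : T -> T -> fcar X) :
  Inv F -> forall i j k, F j k = F (j ** i) (k ** i).
Proof. by case/InvE. Qed.

Definition shift (A : Type) (g : T * T) (F : T -> T -> A) : T -> T -> A :=
  fun j k => F (j ** g.1) (k ** g.2).

Lemma shift11 (A : Type) (F : T -> T -> A) : shift (one, one) F = F.
Proof. by apply: eq_fun2 => j k; rewrite /shift /= !mopm1. Qed.

Lemma Inv_shift (X : fiset I) g (F : T -> T -> fcar X) : Inv F -> Inv (shift g F).
Proof.
move=> invF; apply/InvE; split=> i j k; rewrite /shift.
  by rewrite -mopA InvR.
by rewrite (InvL invF i) mopAC [k ** i ** _]mopAC.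
Qed.

Lemma Inv_geqv (X : fiset I) (F : T -> T -> fcar X) (g h : gT (Kgroup I)) :
  Inv F -> geqv g h -> F g.1 g.2 = F h.1 h.2.
Proof.
move=> invF [e /= ghe].
rewrite (InvL invF (h.2 ** e)) mopA ghe (mopCA g.2 h.2 e).
by rewrite -mopA -(InvL invF).
Qed.

Definition lr_pullback (X : fiset I) := forall i y z,
  fr X i y = fl X i z -> exists x, fl X i x = y /\ fr X i x = z.

Definition inv_determined (X : fiset I) := forall F G : T -> T -> fcar X,
  Inv F -> Inv G -> F one one = G one one -> F = G.

Lemma Inv_equivariant (X Y : fiset I) (f : fcar X -> fcar Y) F :
  lr_pullback X -> iequivariant (fl X) (fr X) (fl Y) (fr Y) f ->
  Inv F -> Inv (fun j k => f (F j k)).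
Proof.
move=> pbX eqf invF; apply/InvE; split=> i j k; last by rewrite -(InvL invF).
have [x [<- <-]] := pbX _ _ _ (InvR invF i j k).
exact: eqf.
Qed.

Lemma Inv_strict_morph (X Y : fiset I) (f : fcar X -> fcar Y) F :
  (forall i x, f (fl X i x) = fl Y i (f x)) ->
  (forall i x, f (fr X i x) = fr Y i (f x)) ->
  Inv F -> Inv (fun j k => f (F j k)).
Proof.
move=> fl_f fr_f invF; apply/InvE; split=> i j k; last by rewrite -(InvL invF).
by rewrite -fr_f InvR // fl_f.
Qed.

Section LeftInvertible.
Variable X : fiset I.
Hypotheses (okX : fiset_ok X) (fl_bij : forall i, bijective (fl X i)).

Let linv i := invF (bij_inj (fl_bij i)).
Let linvK i : cancel (fl X i) (linv i) := invF_f (bij_inj (fl_bij i)).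
Let linvKV i : cancel (linv i) (fl X i) := f_invF (bij_inj (fl_bij i)).

Let fr_linv i j y : fr X j (linv i y) = linv i (fr X j y).
Proof. by case: okX => _ _ _ _ rl; apply: (can_inj (linvK i)); rewrite -rl !linvKV. Qed.

Lemma left_lr_pullback : lr_pullback X.
Proof.
move=> i y z eyz; exists (linv i y); split; first exact: linvKV.
by rewrite fr_linv eyz linvK.
Qed.

Lemma left_inv_determined : inv_determined X.
Proof.
case: okX => _ lM _ rM _.
have linvM i j y : linv (i ** j) y = linv j (linv i y).
  by apply: (can_inj (linvK (i ** j))); rewrite linvKV lM !linvKV.
pose psi i x := linv i (fr X i x).
have psiM i j x : psi (i ** j) x = psi i (psi j x).
  by rewrite /psi hc linvM rM fr_linv.
have Inv_psi (H : T -> T -> fcar X) : Inv H -> forall i m, H one m = psi i (H one (i ** m)).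
  by move=> invH i m; rewrite /psi (InvR invH) linvK.
have H_one (H : T -> T -> fcar X) : Inv H -> forall j k, H j k = linv j (fr X j (H one k)).
  move=> invH j k.
  by rewrite (InvL invH j one k) mop1m hc (InvR invH) linvK.
move=> F G invF invG eFG; apply: eq_fun2 => j k.
rewrite (H_one _ invF) (H_one _ invG); congr (linv j (fr X j _)).
exact: (invariant_fun_eq psiM (Inv_psi _ invF) (Inv_psi _ invG)).
Qed.

End LeftInvertible.

(* For commutative [I] the axioms are symmetric in left and right: exchanging
   the two actions and the two arguments of an invariant map. *)
Definition mirror (X : fiset I) : fiset I := @FISet I (fcar X) (fr X) (fl X).

Lemma mirror_ok (X : fiset I) : fiset_ok X -> fiset_ok (mirror X).
Proof. by case=> l1 lM r1 rM rl; split=> //= i j x; rewrite hc. Qed.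

Lemma Inv_mirror (X : fiset I) (F : T -> T -> fcar X) :
  Inv F -> @Inv (mirror X) (fun j k => F k j).
Proof.
move=> invF; apply/InvE; split=> i j k /=; last exact: InvL invF i k j.
by rewrite -(InvR invF) (InvL invF i k j) (hc k) (hc j).
Qed.

Lemma mirror_inv_determined (X : fiset I) :
  inv_determined (mirror X) -> inv_determined X.
Proof.
move=> detX F G invF invG eFG; apply: eq_fun2 => j k.
have := detX _ _ (Inv_mirror invF) (Inv_mirror invG) eFG.
by move/(congr1 (fun H => H k j)).
Qed.

Lemma mirror_lr_pullback (X : fiset I) : lr_pullback (mirror X) -> lr_pullback X.
Proof. by move=> pbX i y z /esym /pbX [x [? ?]]; exists x. Qed.

Lemma one_sided_inv_determined (X : fiset I) :
  fiset_ok X -> one_side_invertible X -> inv_determined X.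
Proof.
move=> okX [fl_bij|fr_bij]; first exact: left_inv_determined.
exact/mirror_inv_determined/(left_inv_determined (mirror_ok okX)).
Qed.

Lemma one_sided_lr_pullback (X : fiset I) :
  fiset_ok X -> one_side_invertible X -> lr_pullback X.
Proof.
move=> okX [fl_bij|fr_bij]; first exact: left_lr_pullback.
exact/mirror_lr_pullback/(left_lr_pullback (mirror_ok okX)).
Qed.

(** * Invariant maps on objects of bAct(I) *)

Lemma Inv_prod (X Y : fiset I) (F : T -> T -> fcar (prodI X Y)) :
  Inv F <-> Inv (fun j k => (F j k).1 : fcar X) /\ Inv (fun j k => (F j k).2 : fcar Y).
Proof.
split=> [invF | [inv1 inv2]].
  split; apply/InvE; split=> i j k.
  - by have := InvR invF i j k => /(congr1 fst).
  - by rewrite -(InvL invF).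
  - by have := InvR invF i j k => /(congr1 snd).
  - by rewrite -(InvL invF).
apply/InvE; split=> i j k; apply: injective_projections => /=.
- exact: (InvR inv1 i j k).
- exact: (InvR inv2 i j k).
- exact: (InvL inv1 i j k).
- exact: (InvL inv2 i j k).
Qed.

Lemma Inv_inl (X Y : fiset I) (F : T -> T -> fcar X) :
  Inv F <-> Inv (fun j k => inl (F j k) : fcar (sumI X Y)).
Proof.
split=> invF; apply/InvE; split=> i j k.
- by rewrite /= (InvR invF).
- by rewrite -(InvL invF).
- by have := InvR invF i j k => /= [[]].
- by have := InvL invF i j k => [[]].
Qed.

Lemma Inv_inr (X Y : fiset I) (F : T -> T -> fcar Y) :
  Inv F <-> Inv (fun j k => inr (F j k) : fcar (sumI X Y)).
Proof.
split=> invF; apply/InvE; split=> i j k.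
- by rewrite /= (InvR invF).
- by rewrite -(InvL invF).
- by have := InvR invF i j k => /= [[]].
- by have := InvL invF i j k => [[]].
Qed.

Definition is_inl (A B : Type) (s : A + B) := if s is inl _ then true else false.

Lemma Inv_is_inl (X Y : fiset I) (F : T -> T -> fcar (sumI X Y)) :
  Inv F -> forall j k, is_inl (F j k) = is_inl (F one one).
Proof.
move=> invF.
have is_inlR i j k : is_inl (F j (i ** k)) = is_inl (F j k).
  by have := InvR invF i j k; case: (F j (i ** k)); case: (F j k).
move=> j k; rewrite -(mopm1 k) is_inlR (InvL invF j one one) !mop1m.
by rewrite -{3}(mopm1 j) is_inlR.
Qed.

Lemma Inv_sumP (X Y : fiset I) (F : T -> T -> fcar (sumI X Y)) : Inv F ->
  (exists2 F' : T -> T -> fcar X, Inv F' & F = fun j k => inl (F' j k)) \/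
  (exists2 F' : T -> T -> fcar Y, Inv F' & F = fun j k => inr (F' j k)).
Proof.
move=> invF; have same_side := Inv_is_inl invF.
case e11: (F one one) => [x|y]; [left|right].
- have eF : F = fun j k => inl (if F j k is inl x' then x' else x).
    by apply: eq_fun2 => j k; have := same_side j k; rewrite e11; case: (F j k).
  by eexists; last exact: eF; apply/(@Inv_inl X Y); rewrite -eF.
- have eF : F = fun j k => inr (if F j k is inr y' then y' else y).
    by apply: eq_fun2 => j k; have := same_side j k; rewrite e11; case: (F j k).
  by eexists; last exact: eF; apply/(@Inv_inr X Y); rewrite -eF.
Qed.

Lemma inv_determined_prod (X Y : fiset I) :
  inv_determined X -> inv_determined Y -> inv_determined (prodI X Y).
Proof.
move=> detX detY F G /Inv_prod [F1 F2] /Inv_prod [G1 G2] eFG.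
have e1 := detX _ _ F1 G1 (congr1 fst eFG).
have e2 := detY _ _ F2 G2 (congr1 snd eFG).
apply: eq_fun2 => j k; apply: injective_projections.
- exact: (congr1 (fun H => H j k) e1).
- exact: (congr1 (fun H => H j k) e2).
Qed.

Lemma inv_determined_sum (X Y : fiset I) :
  inv_determined X -> inv_determined Y -> inv_determined (sumI X Y).
Proof.
move=> detX detY F G invF invG.
case: (Inv_sumP invF) => -[F' invF' ->]; case: (Inv_sumP invG) => -[G' invG' ->] //=.
- by case=> /(detX _ _ invF' invG') ->.
- by case=> /(detY _ _ invF' invG') ->.
Qed.

Lemma inv_determined_iso (X Y : fiset I) :
  strict_iso X Y -> inv_determined X -> inv_determined Y.
Proof.
case=> f [[g fK gK] flf frf] detX F G invF invG eFG.
have glg := fun i => can2_morph fK gK (flf i).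
have grg := fun i => can2_morph fK gK (frf i).
have := detX _ _ (Inv_strict_morph glg grg invF) (Inv_strict_morph glg grg invG).
move=> /(_ (congr1 g eFG)) egFG; apply: eq_fun2 => j k.
by apply: (can_inj gK); have := congr1 (fun H => H j k) egFG.
Qed.

Lemma lr_pullback_prod (X Y : fiset I) :
  lr_pullback X -> lr_pullback Y -> lr_pullback (prodI X Y).
Proof.
move=> pbX pbY i [y1 y2] [z1 z2] [/pbX [x1 [<- <-]] /pbY [x2 [<- <-]]].
by exists (x1, x2).
Qed.

Lemma lr_pullback_sum (X Y : fiset I) :
  lr_pullback X -> lr_pullback Y -> lr_pullback (sumI X Y).
Proof.
move=> pbX pbY i [y|y] [z|z] //= [].
- by case/pbX=> x [<- <-]; exists (inl x).
- by case/pbY=> x [<- <-]; exists (inr x).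
Qed.

Lemma lr_pullback_iso (X Y : fiset I) :
  strict_iso X Y -> lr_pullback X -> lr_pullback Y.
Proof.
case=> f [[g fK gK] flf frf] pbX i y z eyz.
have /pbX [x [gy gz]] : fr X i (g y) = fl X i (g z).
  by rewrite -(can2_morph fK gK (frf i)) -(can2_morph fK gK (flf i)) eyz.
by exists (f x); rewrite -flf -frf gy gz !gK.
Qed.

Lemma bAct_inv_determined (X : fiset I) : in_bAct X -> inv_determined X.
Proof.
elim=> {X} [X okX /(one_sided_inv_determined okX) //|||X Y _ /inv_determined_iso].
- by move=> X Y _ detX _ detY; apply: inv_determined_prod.
- by move=> X Y _ detX _ detY; apply: inv_determined_sum.
- by apply.
Qed.

Lemma bAct_lr_pullback (X : fiset I) : in_bAct X -> lr_pullback X.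
Proof.
elim=> {X} [X okX /(one_sided_lr_pullback okX) //|||X Y _ /lr_pullback_iso].
- by move=> X Y _ pbX _ pbY; apply: lr_pullback_prod.
- by move=> X Y _ pbX _ pbY; apply: lr_pullback_sum.
- by apply.
Qed.

(** * Transport along zigzags *)

Fixpoint zz_rel (X Y : fiset I) (p : zz X Y) :
    (T -> T -> fcar X) -> (T -> T -> fcar Y) -> Prop :=
  match p in zz X0 Y0 return (T -> T -> fcar X0) -> (T -> T -> fcar Y0) -> Prop with
  | zz_nil X0 => fun F H => @Inv X0 F /\ F = H
  | zz_fwd X0 _ _ f p' => fun F H => @Inv X0 F /\ zz_rel p' (fun j k => f (F j k)) H
  | zz_bwd X0 _ _ w p' => fun F H => @Inv X0 F /\
      exists2 G, (fun j k => w (G j k)) = F & zz_rel p' G H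
  end.

Lemma zz_rel_Inv (X Y : fiset I) (p : zz X Y) F H : zz_rel p F H -> Inv F /\ Inv H.
Proof.
elim: p F H => [X0|X0 Y0 Z0 f p IHp|X0 Y0 Z0 w p IHp] F H /=.
- by case=> invF <-.
- by case=> invF /IHp [].
- by case=> invF [G _ /IHp []].
Qed.

Lemma zz_rel_cat (X Y Z : fiset I) (p : zz X Y) (q : zz Y Z) F H :
  zz_rel (zz_cat p q) F H <-> exists2 G, zz_rel p F G & zz_rel q G H.
Proof.
elim: p q F H => [X0|X0 Y0 Z0 f p IHp|X0 Y0 Z0 w p IHp] q F H /=.
- split=> [pFH | [G [_ ->] //]].
  by exists F => //; split=> //; case: (zz_rel_Inv pFH).
- split=> [[invF /IHp [G pG qG]] | [G [invF pG] qG]]; first by exists G.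
  by split=> //; apply/IHp; exists G.
- split=> [[invF [G eG /IHp [G' pG' qG']]] | [G [invF [G' eG' pG']] qG]].
    by exists G' => //; split=> //; exists G.
  by split=> //; exists G' => //; apply/IHp; exists G.
Qed.

Lemma zz_rel_gen (X Y : fiset I) (g g' : zz X Y) :
  zz_gen g g' -> forall F H, zz_rel g F H <-> zz_rel g' F H.
Proof.
case=> {X Y g g'}.
- by move=> X _ F H /=; split=> [[invF [_ <-]] | [invF <-]].
- move=> X Y Z f g [bX _ eqf] _ _ F H /=.
  split=> [[invF [_ ?]] | [invF ?]]; do 2?split=> //.
  exact: Inv_equivariant (bAct_lr_pullback bX) eqf invF.
- move=> X Y w [[bX _ eqw] [w_inj w_surj]] F H /=.
  split=> [[invF [_ [G eG [invG <-]]]] | [invF <-]]; first by split=> //; apply: w_inj.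
  by do 2?split=> //; [exact: Inv_equivariant (bAct_lr_pullback bX) eqw invF | exists F].
- move=> X Y w [_ [_ w_surj]] F H /=.
  split=> [[invF [G <- [_ [_ <-]]]] // | [invF <-]].
  by have [G [invG eG]] := w_surj F invF; do 2?split=> //; exists G; rewrite ?eG.
Qed.

Lemma zz_rel_equiv (X Y : fiset I) (p p' : zz X Y) :
  zz_equiv p p' -> forall F H, zz_rel p F H <-> zz_rel p' F H.
Proof.
elim=> {p p'} [p p' step | // | p p' _ IH | p q r _ IHpq _ IHqr] F H.
- case: step => [Y' [Z' [a [g [g' [b [gg' -> ->]]]]]]].
  rewrite !zz_rel_cat; split=> -[G aG /zz_rel_cat [G' gG bG]]; exists G => //;
    apply/zz_rel_cat; exists G' => //; exact/(zz_rel_gen gg').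
- by rewrite IH.
- by rewrite IHpq IHqr.
Qed.

Lemma zz_rel_shift (X Y : fiset I) (p : zz X Y) F H g :
  zz_rel p F H -> zz_rel p (shift g F) (shift g H).
Proof.
elim: p F H => [X0|X0 Y0 Z0 f p IHp|X0 Y0 Z0 w p IHp] F H /=.
- by case=> invF <-; split=> //; apply: Inv_shift.
- by case=> invF /IHp pFH; split=> //; apply: Inv_shift.
- case=> invF [G eG /IHp pGH]; split; first exact: Inv_shift.
  by exists (shift g G) => //; rewrite -eG.
Qed.

Lemma zz_rel_retract (X Y : fiset I) (p : zz X Y) (q : zz Y X) :
  zz_equiv (zz_cat p q) (zz_nil X) ->
  forall F G H, zz_rel p F G -> zz_rel q G H -> F = H.
Proof.
move=> pq F G H pFG qGH.
have /(zz_rel_equiv pq) [] // : zz_rel (zz_cat p q) F H by apply/zz_rel_cat; exists G.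
Qed.

Lemma zz_rel_section (X Y : fiset I) (p : zz X Y) (q : zz Y X) :
  zz_equiv (zz_cat p q) (zz_nil X) ->
  forall F, Inv F -> exists2 G, zz_rel p F G & zz_rel q G F.
Proof. by move=> pq F invF; apply/zz_rel_cat/(zz_rel_equiv pq). Qed.

Section ZigzagIso.
Variables (X Y : fiset I) (p : zz X Y) (q : zz Y X).
Hypotheses (pq : zz_equiv (zz_cat p q) (zz_nil X))
           (qp : zz_equiv (zz_cat q p) (zz_nil Y)).

Lemma zz_rel_functional F G G' : zz_rel p F G -> zz_rel p F G' -> G = G'.
Proof.
move=> pFG pFG'; have [F1 qG'F1 pF1G'] := zz_rel_section qp (proj2 (zz_rel_Inv pFG')).
have eF1 := zz_rel_retract pq pFG' qG'F1; rewrite -eF1 in qG'F1.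
by rewrite (zz_rel_retract qp qG'F1 pFG).
Qed.

Lemma zz_rel_injective F F' G : zz_rel p F G -> zz_rel p F' G -> F = F'.
Proof.
move=> pFG pF'G; have [F1 qGF1 _] := zz_rel_section qp (proj2 (zz_rel_Inv pFG)).
by rewrite (zz_rel_retract pq pFG qGF1) (zz_rel_retract pq pF'G qGF1).
Qed.

End ZigzagIso.

(** * The K(I)-set of invariant maps *)

(* An invariant map [F] is recorded by its value [F 1 1]; on [bAct(I)] this
   loses nothing ([bAct_inv_determined]) and makes [Inv(X)] a finite set. *)
Definition inv_point (X : fiset I) (x : fcar X) : Prop :=
  exists F : T -> T -> fcar X, Inv F /\ F one one = x.

Definition inv_car (X : fiset I) : finType := {x : fcar X | classically (inv_point x)}.

Definition inv_of (X : fiset I) (x : inv_car X) : T -> T -> fcar X :=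
  sval (constructive_indefinite_description _ (elimT (classicallyP _) (valP x))).

Lemma inv_ofP (X : fiset I) (x : inv_car X) : Inv (inv_of x) /\ inv_of x one one = val x.
Proof. by rewrite /inv_of; case: constructive_indefinite_description. Qed.

Lemma Inv_inv_of (X : fiset I) (x : inv_car X) : Inv (inv_of x).
Proof. by case: (inv_ofP x). Qed.

Lemma inv_of11 (X : fiset I) (x : inv_car X) : inv_of x one one = val x.
Proof. by case: (inv_ofP x). Qed.

Lemma inv_of_inj (X : fiset I) : injective (@inv_of X).
Proof. by move=> x y exy; apply: val_inj; rewrite -!inv_of11 exy. Qed.

Lemma inv_ofE (X : fiset I) (x : inv_car X) F :
  inv_determined X -> Inv F -> F one one = val x -> inv_of x = F.
Proof. by move=> detX invF Fx; apply: detX (Inv_inv_of x) invF _; rewrite Fx inv_of11. Qed.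

Definition inv_elt (X : fiset I) F (invF : @Inv X F) (j k : T) : inv_car X.
Proof.
exists (F j k); apply/classicallyP; exists (shift (j, k) F).
by split; [apply: Inv_shift | rewrite /shift /= !mop1m].
Defined.

Lemma inv_of_elt (X : fiset I) F (invF : @Inv X F) j k :
  inv_determined X -> inv_of (inv_elt invF j k) = shift (j, k) F.
Proof.
by move=> detX; apply: inv_ofE => //; [apply: Inv_shift | rewrite /shift /= !mop1m].
Qed.

Lemma inv_of_elt11 (X : fiset I) F (invF : @Inv X F) :
  inv_determined X -> inv_of (inv_elt invF one one) = F.
Proof. by move=> detX; rewrite inv_of_elt // shift11. Qed.

Definition inv_gset (X : fiset I) : gset (Kgroup I) :=
  @GSet (Kgroup I) (inv_car X) (fun g x => inv_elt (Inv_inv_of x) g.1 g.2).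

Lemma inv_gset_ok (X : fiset I) : inv_determined X -> is_gset (inv_gset X).
Proof.
move=> detX; split=> [g h x ghe | x | g h x]; apply: val_inj => /=.
- exact: Inv_geqv (Inv_inv_of x) ghe.
- exact: inv_of11.
- by rewrite inv_of_elt.
Qed.

Definition inv_gobj (X : bObj I) : GObj (Kgroup I) :=
  exist _ (inv_gset (sval X)) (inv_gset_ok (bAct_inv_determined (svalP X))).

Lemma Ho_iso_inv_gset (X Y : fiset I) :
  in_bAct X -> in_bAct Y -> Ho_iso X Y -> gset_iso (inv_gset X) (inv_gset Y).
Proof.
move=> /bAct_inv_determined detX /bAct_inv_determined detY [p [q [_ _ pq qp]]].
apply: (@gset_iso_of_rel _ (inv_gset X) (inv_gset Y)
  (fun x y => zz_rel p (inv_of x) (inv_of y))).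
- move=> x; have [G pxG _] := zz_rel_section pq (Inv_inv_of x).
  by exists (inv_elt (proj2 (zz_rel_Inv pxG)) one one); rewrite inv_of_elt11.
- by move=> x y y' pxy pxy'; apply/inv_of_inj/(zz_rel_functional pq qp pxy pxy').
- by move=> x x' y pxy px'y; apply/inv_of_inj/(zz_rel_injective pq qp pxy px'y).
- move=> y; have [G _ pGy] := zz_rel_section qp (Inv_inv_of y).
  by exists (inv_elt (proj1 (zz_rel_Inv pGy)) one one); rewrite inv_of_elt11.
- by move=> g x y pxy /=; rewrite !inv_of_elt //; apply: zz_rel_shift.
Qed.

(* A [K(I)]-set as an object of [bAct(I)]: trivial right action, and [i]
   acting on the left as the group element [(1, i)], i.e. as [i^-1]. *)
Definition gset_fiset (S : gset (Kgroup I)) : fiset I :=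
  @FISet I (gcar S) (fun i x => gact S (one, i) x) (fun _ x => x).

Lemma gset_fiset_bAct (S : gset (Kgroup I)) : is_gset S -> in_bAct (gset_fiset S).
Proof.
case=> S_eqv S1 SM; apply: bA_inv.
  split=> //= i j x; rewrite -SM; apply: S_eqv.
  by exists one => /=; rewrite !mop1m.
left=> i; exists (gact S (i, one)) => x /=; rewrite -SM -[RHS]S1; apply: S_eqv;
  by exists one => /=; rewrite !mop1m !mopm1.
Qed.

Lemma val_inv_weq (X : fiset I) (bX : in_bAct X) :
  @is_weq I (gset_fiset (inv_gset X)) X (fun x => val x).
Proof.
have detX := bAct_inv_determined bX.
split; first split.
- exact/gset_fiset_bAct/inv_gset_ok.
- exact: bX.
- by move=> i x /=; rewrite -inv_of11 -(InvR (Inv_inv_of x)) mopm1.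
split=> [F G _ _ eFG | H invH].
  by apply: eq_fun2 => j k; apply: val_inj; move: eFG => /(congr1 (fun H => H j k)).
exists (fun j k => inv_elt invH j k); split=> //.
apply/InvE; split=> i j k; apply: val_inj => /=.
  by rewrite inv_of_elt // /shift /= mop1m.
exact: InvL invH i j k.
Qed.

Lemma gset_iso_weq (S S' : gset (Kgroup I)) (s : gcar S -> gcar S') :
  is_gset S -> is_gset S' -> bijective s ->
  (forall g x, s (gact S g x) = gact S' g (s x)) ->
  @is_weq I (gset_fiset S) (gset_fiset S') s.
Proof.
move=> okS okS' [s' sK s'K] s_act.
have s'_act g y : s' (gact S' g y) = gact S g (s' y) := can2_morph sK s'K (s_act g) y.
split; first split; try exact: gset_fiset_bAct; first by move=> i x /=; rewrite s_act.
split=> [F G _ _ eFG | H /InvE [/= HR HL]].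
  by apply: eq_fun2 => j k; apply: (can_inj sK); move: eFG => /(congr1 (fun H => H j k)).
exists (fun j k => s' (H j k)); split; last by apply: eq_fun2 => j k; rewrite s'K.
by apply/(@InvE (gset_fiset S)); split=> i j k /=; [rewrite HR s'_act | rewrite -HL].
Qed.

Lemma inv_gset_iso_Ho (X Y : fiset I) :
  in_bAct X -> in_bAct Y -> gset_iso (inv_gset X) (inv_gset Y) -> Ho_iso X Y.
Proof.
move=> bX bY [s [s_bij s_act]].
have okX := inv_gset_ok (bAct_inv_determined bX).
have okY := inv_gset_ok (bAct_inv_determined bY).
apply: Ho_iso_trans (Ho_iso_sym (weq_Ho_iso (val_inv_weq bX))) _.
apply: Ho_iso_trans (weq_Ho_iso (gset_iso_weq okX okY s_bij s_act)) _.
exact: weq_Ho_iso (val_inv_weq bY).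
Qed.

Lemma inv_gset_sum (X Y : fiset I) : inv_determined X -> inv_determined Y ->
  gset_iso (inv_gset (sumI X Y)) (gsumS (inv_gset X) (inv_gset Y)).
Proof.
move=> detX detY; have detXY := inv_determined_sum detX detY.
apply: (@gset_iso_of_rel _ (inv_gset (sumI X Y)) (gsumS (inv_gset X) (inv_gset Y))
  (fun x s => val x = match s with inl a => inl (val a) | inr b => inr (val b) end)).
- move=> x; rewrite -inv_of11.
  case: (Inv_sumP (Inv_inv_of x)) => -[F invF ->].
  + by exists (inl (inv_elt invF one one)).
  + by exists (inr (inv_elt invF one one)).
- by move=> x [a|b] [a'|b'] -> // [/val_inj ->].
- by move=> x x' [a|b] /= e1 e2; apply/val_inj/(etrans e1 (esym e2)).
- case=> [a|b].
  + by exists (inv_elt (proj1 (Inv_inl Y _) (Inv_inv_of a)) one one); rewrite /= inv_of11.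
  + by exists (inv_elt (proj1 (Inv_inr X _) (Inv_inv_of b)) one one); rewrite /= inv_of11.
- move=> g x [a|b] /= e.
  + by rewrite (inv_ofE detXY (proj1 (Inv_inl Y _) (Inv_inv_of a))) ?inv_of11.
  + by rewrite (inv_ofE detXY (proj1 (Inv_inr X _) (Inv_inv_of b))) ?inv_of11.
Qed.

Lemma inv_gset_prod (X Y : fiset I) : inv_determined X -> inv_determined Y ->
  gset_iso (inv_gset (prodI X Y)) (gprodS (inv_gset X) (inv_gset Y)).
Proof.
move=> detX detY; have detXY := inv_determined_prod detX detY.
have Inv_pair (a : inv_car X) (b : inv_car Y) :
    @Inv (prodI X Y) (fun j k => (inv_of a j k, inv_of b j k)).
  by apply/Inv_prod; split; apply: Inv_inv_of.
apply: (@gset_iso_of_rel _ (inv_gset (prodI X Y)) (gprodS (inv_gset X) (inv_gset Y))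
  (fun x ab => val x = (val ab.1, val ab.2))).
- move=> x; have [inv1 inv2] := proj1 (Inv_prod _) (Inv_inv_of x).
  exists (inv_elt inv1 one one, inv_elt inv2 one one).
  by rewrite -inv_of11 /=; case: (inv_of x _ _).
- by move=> x [a b] [a' b'] /= -> [/val_inj -> /val_inj ->].
- by move=> x x' [a b] /= e1 e2; apply/val_inj/(etrans e1 (esym e2)).
- by case=> a b; exists (inv_elt (Inv_pair a b) one one); rewrite /= !inv_of11.
- by move=> g x [a b] /= e; rewrite (inv_ofE detXY (Inv_pair a b)) //= !inv_of11.
Qed.

Lemma inv_gset_point : gset_iso (inv_gset (pointI I)) (gpointS (Kgroup I)).
Proof.
have invF : @Inv (pointI I) (fun _ _ => tt) by apply/(@InvE (pointI I)).
apply: (@gset_iso_of_rel _ _ _ (fun _ _ => True)) => //.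
- by move=> _ [] [].
- by move=> x x' _ _ _; apply: val_inj; case: (val x); case: (val x').
- by move=> _; exists (inv_elt invF one one).
Qed.

Lemma inv_gset_empty : gset_iso (inv_gset (emptyI I)) (gemptyS (Kgroup I)).
Proof. by apply: (@gset_iso_of_rel _ _ _ (fun _ _ => True)) => // [[[]]]. Qed.

Lemma inv_gset_gset_fiset (S : gset (Kgroup I)) :
  is_gset S -> gset_iso (inv_gset (gset_fiset S)) S.
Proof.
move=> okS; have detS := bAct_inv_determined (gset_fiset_bAct okS).
case: okS => S_eqv S1 SM.
have Inv_orbit y : @Inv (gset_fiset S) (fun j k => gact S (j, k) y).
  apply/InvE; split=> i j k /=; first by rewrite -SM /= mop1m.
  by apply: S_eqv; exists one => /=; rewrite !mopm1 (hc k i) mopA.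
apply: (@gset_iso_of_rel _ (inv_gset (gset_fiset S)) S (fun x y => val x = y)).
- by move=> x; exists (val x).
- by move=> x y y' <- <-.
- by move=> x x' y e1 e2; apply/val_inj/(etrans e1 (esym e2)).
- by move=> y; exists (inv_elt (Inv_orbit y) one one); apply: S1.
- by move=> [j k] x _ <- /=; rewrite (inv_ofE detS (Inv_orbit (val x))).
Qed.

Lemma inv_gset_sum3 (X Y Z : fiset I) (S : gset (Kgroup I)) :
  inv_determined X -> inv_determined Y -> inv_determined Z ->
  gset_iso (inv_gset Z) S ->
  gset_iso (inv_gset (sumI (sumI X Y) Z)) (gsumS (gsumS (inv_gset X) (inv_gset Y)) S).
Proof.
move=> detX detY detZ isoZ.
apply: gset_iso_trans (inv_gset_sum (inv_determined_sum detX detY) detZ) _.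
exact: gset_iso_sum (inv_gset_sum detX detY) isoZ.
Qed.

Definition gobj_bobj (S : GObj (Kgroup I)) : bObj I :=
  exist _ (gset_fiset (sval S)) (gset_fiset_bAct (svalP S)).

Lemma bobj_inv_determined (X : bObj I) : inv_determined (sval X).
Proof. exact: bAct_inv_determined (svalP X). Qed.

Lemma inv_gobj_reqv (a b : bObj I * bObj I) :
  @reqv (BurnsideMonoid I) a b <->
  @reqv (BurnsideGroup (Kgroup I))
    (inv_gobj a.1, inv_gobj a.2) (inv_gobj b.1, inv_gobj b.2).
Proof.
case: a b => [a1 a2] [b1 b2]; have det := bobj_inv_determined.
split=> -[k /= iso_k].
- exists (inv_gobj k); apply: gset_iso_trans
    (gset_iso_sym (inv_gset_sum3 (det a1) (det b2) (det k) (gset_iso_refl _))) _.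
  apply: gset_iso_trans
    (Ho_iso_inv_gset (svalP (bsum (bsum a1 b2) k)) (svalP (bsum (bsum b1 a2) k)) iso_k) _.
  exact: inv_gset_sum3 (det b1) (det a2) (det k) (gset_iso_refl _).
- have iso_k' := inv_gset_gset_fiset (svalP k).
  exists (gobj_bobj k).
  apply: (inv_gset_iso_Ho (svalP (bsum (bsum a1 b2) _)) (svalP (bsum (bsum b1 a2) _))).
  apply: gset_iso_trans (inv_gset_sum3 (det a1) (det b2) (det (gobj_bobj k)) iso_k') _.
  apply: gset_iso_trans iso_k _; apply: gset_iso_sym.
  exact: inv_gset_sum3 (det b1) (det a2) (det (gobj_bobj k)) iso_k'.
Qed.

End InvariantMaps.

Lemma burnside_reqv_of_iso (G : gdata) (x1 x2 : GObj G) (y : GObj G * GObj G) :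
  gset_iso (sval x1) (sval y.1) -> gset_iso (sval x2) (sval y.2) ->
  @reqv (BurnsideGroup G) (x1, x2) y.
Proof.
case: y => y1 y2 /= iso1 iso2; exists x1 => /=.
exact: gset_iso_sum (gset_iso_sum iso1 (gset_iso_sym iso2)) (gset_iso_refl _).
Qed.

Theorem mainTheorem14 (I : bs_monoid) :
  bs_commutative I ->
  ring_isomorphic (BurnsideMonoid I) (BurnsideGroup (Kgroup I)).
Proof.
move=> hc; have det := bobj_inv_determined hc.
exists (fun a => (inv_gobj hc a.1, inv_gobj hc a.2)); split.
- exact: inv_gobj_reqv.
- move=> [s1 s2]; exists (gobj_bobj s1, gobj_bobj s2).
  by apply: burnside_reqv_of_iso; apply: inv_gset_gset_fiset; apply: svalP.
- move=> [a1 a2] [b1 b2]; apply: burnside_reqv_of_iso; exact: inv_gset_sum.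
- move=> [a1 a2] [b1 b2]; apply: burnside_reqv_of_iso => /=;
    (apply: gset_iso_trans (inv_gset_sum _ _ _) _;
     [exact: inv_determined_prod | exact: inv_determined_prod |
      apply: gset_iso_sum; exact: inv_gset_prod]).
- apply: burnside_reqv_of_iso; [exact: inv_gset_point | exact: inv_gset_empty].
Qed.
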